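(* For every tetrahedral erasure channel $W$, $A(W^{s})\le A(W)\bigl(1-A(W)/3\bigr)$ and $A(W^{p})\le A(W)\bigl(1-A(W)/3\bigr)$.
   Context: $\mathrm{TEC}(p,q,r,s,t)$ denotes a tetrahedral erasure channel with parameters $p,q,r,s,t\ge0$ summing to $1$. Its moment of inertia is $A(\mathrm{TEC}(p,q,r,s,t))=(q-r)^2+(r-s)^2+(s-q)^2$. For $W=\mathrm{TEC}(p,q,r,s,t)$, the serial child is $W^{s}=\mathrm{TEC}(p^2,\ ps+sq+qp,\ pq+qr+rp,\ pr+rs+sp,\ 1-\text{(sum of the other four)})$ and the parallel child is $W^{p}=\mathrm{TEC}(1-\text{(sum of the other four)},\ ts+sq+qt,\ tq+qr+rt,\ tr+rs+st,\ t^2)$. *)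

From Stdlib Require Import Reals Lra.
Open Scope R_scope.

Record TEC : Type := mkTEC {
  tp : R; tq : R; tr : R; ts : R; tt : R }.

Definition is_TEC (W : TEC) : Prop :=
  0 <= tp W /\ 0 <= tq W /\ 0 <= tr W /\ 0 <= ts W /\ 0 <= tt W /\
  tp W + tq W + tr W + ts W + tt W = 1.

Definition inertia (W : TEC) : R :=
  (tq W - tr W)^2 + (tr W - ts W)^2 + (ts W - tq W)^2.

Definition serial (W : TEC) : TEC :=
  let p := tp W in let q := tq W in let r := tr W in let s := ts W in
  let p' := p^2 in
  let q' := p*s + s*q + q*p in
  let r' := p*q + q*r + r*p in
  let s' := p*r + r*s + s*p in
  mkTEC p' q' r' s' (1 - (p' + q' + r' + s')).

Definition parallel (W : TEC) : TEC :=
  let q := tq W in let r := tr W in let s := ts W in let t := tt W in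
  let q' := t*s + s*q + q*t in
  let r' := t*q + q*r + r*t in
  let s' := t*r + r*s + s*t in
  let t' := t^2 in
  mkTEC (1 - (q' + r' + s' + t')) q' r' s' t'.

From Stdlib Require Import Reals Lra Psatz.
Open Scope R_scope.

(* Both children of TEC(a,q,r,s,_) (with a = p for the serial and a = t for the
   parallel child) have coordinate differences that factor:
   q' - r' = -(a+q)(r-s), r' - s' = -(a+r)(s-q), s' - q' = -(a+s)(q-r).
   Each factor a+x is at most 1 - |difference it multiplies|, which gives
   u^2 d^2 <= d^2 - d^4 termwise; and since the three differences d_i sum to 0,
   A^2 = (sum d_i^2)^2 = 2 sum d_i^4, so sum d_i^2 - sum d_i^4 <= A - A^2/3. *)

Lemma sqr_mul_sqr_le (u d : R) :
  0 <= u -> - (1 - u) <= d <= 1 - u -> u^2 * d^2 <= d^2 - d^4.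
Proof.
  intros Hu [Hlo Hhi].
  assert (Hd : d^2 <= (1 - u)^2) by nra.
  assert (Hu1 : u^2 <= 1 - d^2) by nra.
  assert (0 <= d^2) by nra.
  nra.
Qed.

Lemma sqr_sum_sqr_of_sum0 (a b c : R) :
  a + b + c = 0 -> (a^2 + b^2 + c^2)^2 = 2 * (a^4 + b^4 + c^4).
Proof.
  intros H.
  replace c with (- a - b) by lra.
  ring.
Qed.

Lemma child_inertia_le (a q r s : R) :
  0 <= a -> 0 <= q -> 0 <= r -> 0 <= s -> a + q + r + s <= 1 ->
  let A := (q - r)^2 + (r - s)^2 + (s - q)^2 in
  ((a*s + s*q + q*a) - (a*q + q*r + r*a))^2
  + ((a*q + q*r + r*a) - (a*r + r*s + s*a))^2
  + ((a*r + r*s + s*a) - (a*s + s*q + q*a))^2 <= A * (1 - A / 3).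
Proof.
  intros Ha Hq Hr Hs Hsum A.
  assert (Hchild :
    ((a*s + s*q + q*a) - (a*q + q*r + r*a))^2
    + ((a*q + q*r + r*a) - (a*r + r*s + s*a))^2
    + ((a*r + r*s + s*a) - (a*s + s*q + q*a))^2
    = (a + q)^2 * (r - s)^2 + (a + r)^2 * (s - q)^2 + (a + s)^2 * (q - r)^2)
    by ring.
  assert (HA2 : A^2 = 2 * ((q - r)^4 + (r - s)^4 + (s - q)^4))
    by (apply sqr_sum_sqr_of_sum0; ring).
  assert (HA : A * (1 - A / 3) = A - A^2 / 3) by (unfold Rdiv; ring).
  pose proof (sqr_mul_sqr_le (a + q) (r - s) ltac:(lra) ltac:(lra)).
  pose proof (sqr_mul_sqr_le (a + r) (s - q) ltac:(lra) ltac:(lra)).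
  pose proof (sqr_mul_sqr_le (a + s) (q - r) ltac:(lra) ltac:(lra)).
  assert (Hfourth : forall x : R, 0 <= x^4) by (intro x; nra).
  pose proof (Hfourth (q - r)); pose proof (Hfourth (r - s)); pose proof (Hfourth (s - q)).
  rewrite Hchild, HA, HA2; unfold A; lra.
Qed.

Theorem mainTheorem2 (W : TEC) (HW : is_TEC W) :
  inertia (serial W) <= inertia W * (1 - inertia W / 3) /\
  inertia (parallel W) <= inertia W * (1 - inertia W / 3).
Proof.
  destruct W as [p q r s t].
  destruct HW as [Hp [Hq [Hr [Hs [Ht Hsum]]]]]; simpl in *.
  unfold inertia, serial, parallel; simpl.
  split.
  - apply (child_inertia_le p q r s); lra.
  - apply (child_inertia_le t q r s); lra.
Qed.
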